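(* For every integer $a \ge 4$ divisible by four and every odd integer $b \ge 3$, $R_\mathrm{cyc}(M_a^\mathrm{nest}, S_b) \ge a + b - 3$, where $S_b$ is any star graph of order $b$.
   Context: All graphs are finite, simple and undirected, and a graph of order $n$ has vertex set $\{0,1,\ldots,n-1\}$; $K_n$ is the complete graph on $\{0,\ldots,n-1\}$. A $2$-edge-coloring of $K_n$ assigns each edge a color in $\{1,2\}$. For a graph $H$ and such a coloring, an embedding of $H$ in color $j$ is an injective map $\varphi\colon V(H)\to V(K_n)$ such that for every edge $uv$ of $H$ the edge $\{\varphi(u),\varphi(v)\}$ has color $j$; it is increasing up to a cyclic permutation if there exists $t\in V(H)$ such that $(\varphi(t),\ldots,\varphi(|H|-1),\varphi(0),\ldots,\varphi(t-1))$ is increasing. The cyclic Ramsey number $R_\mathrm{cyc}(H_1,H_2)$ is the smallest $n$ such that every $2$-edge-coloring of $K_n$ admits an embedding of $H_1$ in color $1$ or of $H_2$ in color $2$ that is increasing up to a cyclic permutation. For even $n\ge2$, the nested matching $M_n^\mathrm{nest}$ is the graph of order $n$ whose edges are $\{v,n-1-v\}$ for $0\le v\le n/2-1$. A star graph of order $n$ is a graph on $\{0,\ldots,n-1\}$ in which one vertex (the center, arbitrary) is adjacent to all others and there are no other edges; the value of $R_\mathrm{cyc}$ does not depend on the choice of center. *)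

From mathcomp Require Import all_boot.
Set Implicit Arguments. Unset Strict Implicit. Unset Printing Implicit Defensive.

(* A graph of order h on vertex set {0,..,h-1} is given by its edge relation
   E : rel 'I_h (only its values on pairs matter; the graphs used below are
   symmetric and irreflexive). *)

Definition coloring (n : nat) (c : 'I_n -> 'I_n -> nat) : Prop :=
  (forall x y, c x y = c y x) /\ (forall x y, x != y -> c x y \in [:: 1; 2]).

Definition embedding_in_color (h n : nat) (E : rel 'I_h)
    (c : 'I_n -> 'I_n -> nat) (j : nat) (phi : 'I_h -> 'I_n) : Prop :=
  injective phi /\ (forall u v, E u v -> c (phi u) (phi v) = j).

(* Position of vertex i in the rotated sequence (t, t+1, ..., h-1, 0, ..., t-1). *)
Definition rot_pos (h : nat) (t i : 'I_h) : nat := (i + h - t) %% h.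

Definition increasing_up_to_cyclic (h n : nat) (phi : 'I_h -> 'I_n) : Prop :=
  exists t : 'I_h, forall i j : 'I_h,
    rot_pos t i < rot_pos t j -> phi i < phi j.

Definition cyc_ramsey_prop (h1 : nat) (E1 : rel 'I_h1) (h2 : nat) (E2 : rel 'I_h2)
    (n : nat) : Prop :=
  forall c : 'I_n -> 'I_n -> nat, coloring c ->
    (exists phi : 'I_h1 -> 'I_n,
        embedding_in_color E1 c 1 phi /\ increasing_up_to_cyclic phi) \/
    (exists psi : 'I_h2 -> 'I_n,
        embedding_in_color E2 c 2 psi /\ increasing_up_to_cyclic psi).

(* R_cyc(H1,H2) >= m, where R_cyc is the smallest n with the property
   (and +infinity if no such n exists): the property fails for all n < m. *)
Definition Rcyc_ge (h1 : nat) (E1 : rel 'I_h1) (h2 : nat) (E2 : rel 'I_h2)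
    (m : nat) : Prop :=
  forall n, n < m -> ~ cyc_ramsey_prop E1 E2 n.

(* Nested matching M_n^nest: edges {v, n-1-v}, 0 <= v <= n/2 - 1
   (for even n, exactly the pairs u,v with u + v = n - 1). *)
Definition nest_matching (n : nat) : rel 'I_n :=
  fun u v => (u + v == n.-1) && (u != v).

Definition star (b : nat) (ctr : 'I_b) : rel 'I_b :=
  fun u v => (u != v) && ((u == ctr) || (v == ctr)).

Arguments nest_matching n : clear implicits.
Arguments star b ctr : clear implicits.

From mathcomp Require Import all_boot zify.
Set Implicit Arguments. Unset Strict Implicit. Unset Printing Implicit Defensive.

(* Write a = 4m, b = 2j + 1, h = 2m + j - 2, r = 2m - 1, and colour the edge {x, y} of K_n,
   n <= 2h + 1, by the circular distance d of x and y in Z_(2h+1): colour 1 ("red") if d < r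
   or d = h, colour 2 otherwise.  The leaves of a colour-2 star lie at circular distance in
   [r, h) from its centre, on either side, so there are at most 2(h - r) = b - 3 of them.
   A cyclically increasing map preserves the cyclic order of Z_a and does not shrink
   clockwise gaps, so the images of the matching edges {m - 1, 3m} and {m, 3m - 1} are two
   parallel chords of Z_(2h+1) whose circular lengths are at least r; if both were red, both
   would have length h, which is impossible because the clockwise arc spanned by the outer
   chord exceeds the one spanned by the inner chord by at least 2. *)

Definition cw_dist (N x y : nat) : nat := if x <= y then y - x else N + y - x.

Definition circ_dist (N x y : nat) : nat := minn (cw_dist N x y) (cw_dist N y x).

Lemma cw_distnn N x : cw_dist N x x = 0.
Proof. by rewrite /cw_dist leqnn subnn. Qed.

Lemma cw_distC N x y : x < N -> y < N -> x != y -> cw_dist N x y + cw_dist N y x = N.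
Proof. by move=> ? ? /eqP; rewrite /cw_dist; case: (leqP x y); case: (leqP y x); lia. Qed.

Lemma cw_dist_inj N x y z : x < N -> y < N -> z < N -> cw_dist N x y = cw_dist N x z -> y = z.
Proof. by rewrite /cw_dist; case: (leqP x y); case: (leqP x z); lia. Qed.

Lemma cw_dist_rot N t x y : t < N -> x < N -> y < N ->
  cw_dist N (cw_dist N t x) (cw_dist N t y) = cw_dist N x y.
Proof.
rewrite /cw_dist => ? ? ?.
by case: (leqP t x); case: (leqP t y) => *; case: leqP; case: (leqP x y); lia.
Qed.

Lemma rot_posE h (t i : 'I_h) : rot_pos t i = cw_dist h t i.
Proof.
rewrite /rot_pos /cw_dist; have := ltn_ord i; have := ltn_ord t.
case: (leqP t i) => [le_ti *|*]; last by rewrite modn_small; lia.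
by rewrite addnC -addnBA // modnDl modn_small; lia.
Qed.

Section CyclicallyIncreasing.

Variables (a N : nat) (phi : 'I_a -> nat) (t : 'I_a).
Hypothesis phi_lt : forall i, phi i < N.
Hypothesis phi_incr : forall i j, rot_pos t i < rot_pos t j -> phi i < phi j.

Lemma rot_pos_lt i : rot_pos t i < a.
Proof. by rewrite rot_posE /cw_dist; have := ltn_ord i; have := ltn_ord t; case: (leqP t i); lia. Qed.

Lemma rot_pos_inj : injective (rot_pos t).
Proof.
move=> i j; rewrite !rot_posE => /cw_dist_inj eq_ij.
by apply: val_inj; apply: eq_ij.
Qed.

Lemma rot_pos_ordS i : (rot_pos t i).+1 < a -> rot_pos t (ordS i) = (rot_pos t i).+1.
Proof.
rewrite !rot_posE /cw_dist /=; move: (ltn_ord i) (ltn_ord t).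
case: (ltnP i.+1 a) => [i1_lt | i1_ge]; first rewrite modn_small //.
  by case: (leqP t i); case: (leqP t i.+1); lia.
have -> : i.+1 = a by have := ltn_ord i; lia.
by rewrite modnn; have := ltn_ord i; case: (leqP t i); case: (leqP t 0); lia.
Qed.

Lemma incr_iter_ordS d i : rot_pos t i + d < a ->
  rot_pos t (iter d (@ordS a) i) = rot_pos t i + d /\ phi i + d <= phi (iter d (@ordS a) i).
Proof.
elim: d => [|d IH] lt_a; first by rewrite !addn0.
have /IH [pos_d phi_d] : rot_pos t i + d < a by lia.
have pos_d1 : rot_pos t (iter d.+1 (@ordS a) i) = rot_pos t i + d.+1.
  by rewrite /= rot_pos_ordS pos_d // -addnS.
split=> //; have := phi_incr (i := iter d (@ordS a) i) (j := iter d.+1 (@ordS a) i).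
by rewrite pos_d pos_d1; lia.
Qed.

Lemma incr_spread i j : rot_pos t i <= rot_pos t j ->
  phi i + (rot_pos t j - rot_pos t i) <= phi j.
Proof.
move=> le_ij; have /incr_iter_ordS [pos] :
  rot_pos t i + (rot_pos t j - rot_pos t i) < a by rewrite subnKC // rot_pos_lt.
by rewrite subnKC // in pos; rewrite (rot_pos_inj pos).
Qed.

Lemma incr_bounds i : rot_pos t i <= phi i /\ phi i + (a - rot_pos t i) <= N.
Proof.
split; first by have := incr_spread (i := t) (j := i); rewrite rot_posE cw_distnn; lia.
have := rot_pos_lt i; have /incr_iter_ordS [_] : rot_pos t i + (a - (rot_pos t i).+1) < a.
  by have := rot_pos_lt i; lia.
by have := phi_lt (iter (a - (rot_pos t i).+1) (@ordS a) i); lia.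
Qed.

Lemma incr_leE i j : (phi i <= phi j) = (rot_pos t i <= rot_pos t j).
Proof.
case: (leqP (rot_pos t i) (rot_pos t j)) => [le_ij | /phi_incr lt_ji].
  by have := incr_spread le_ij; lia.
by apply/negbTE; rewrite -ltnNge.
Qed.

Lemma cw_dist_incr (i j : 'I_a) : cw_dist a i j <= cw_dist N (phi i) (phi j).
Proof.
rewrite -(@cw_dist_rot a t i j) // -!rot_posE /cw_dist incr_leE.
case: (leqP (rot_pos t i) (rot_pos t j)) => [le_ij | lt_ji].
  by have := incr_spread le_ij; lia.
by have := incr_bounds i; have := incr_bounds j; lia.
Qed.

Lemma cw_distD_incr (i j l : 'I_a) : cw_dist a i j + cw_dist a j l = cw_dist a i l ->
  cw_dist N (phi i) (phi j) + cw_dist N (phi j) (phi l) = cw_dist N (phi i) (phi l).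
Proof.
rewrite -(@cw_dist_rot a t i j) -?(@cw_dist_rot a t j l) -?(@cw_dist_rot a t i l) //.
rewrite -!rot_posE /cw_dist !incr_leE.
have := incr_leE i j; have := incr_leE j l; have := incr_leE i l.
have := rot_pos_lt i; have := rot_pos_lt j; have := rot_pos_lt l.
have := phi_lt i; have := phi_lt j; have := phi_lt l.
by case: (leqP (rot_pos t i) (rot_pos t j)); case: (leqP (rot_pos t j) (rot_pos t l));
  case: (leqP (rot_pos t i) (rot_pos t l)); lia.
Qed.

End CyclicallyIncreasing.

Definition red (h r x y : nat) : bool :=
  (circ_dist h.*2.+1 x y < r) || (circ_dist h.*2.+1 x y == h).

Lemma parallel_chords_not_red h r A B C D :
  A < h.*2.+1 -> B < h.*2.+1 -> C < h.*2.+1 -> D < h.*2.+1 -> 0 < r ->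
  0 < cw_dist h.*2.+1 A B -> r <= cw_dist h.*2.+1 B C -> 0 < cw_dist h.*2.+1 C D ->
  r <= cw_dist h.*2.+1 D A ->
  cw_dist h.*2.+1 A B + cw_dist h.*2.+1 B C + cw_dist h.*2.+1 C D = cw_dist h.*2.+1 A D ->
  red h r A D -> red h r B C -> False.
Proof.
move=> A_lt B_lt C_lt D_lt r_gt0 AB BC CD DA ABCD.
have A_D : A != D by apply/eqP=> eq_AD; move: ABCD; rewrite eq_AD cw_distnn; lia.
have B_C : B != C by apply/eqP=> eq_BC; move: BC; rewrite eq_BC cw_distnn; lia.
rewrite /red /circ_dist.
by have := cw_distC A_lt D_lt A_D; have := cw_distC B_lt C_lt B_C; lia.
Qed.

Lemma nest_matching_not_red a m h r (phi : 'I_a -> nat) (t : 'I_a) :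
  a = 4 * m -> 0 < r < m.*2 -> (forall i, phi i < h.*2.+1) ->
  (forall i j, rot_pos t i < rot_pos t j -> phi i < phi j) ->
  ~ (forall u v, nest_matching a u v -> red h r (phi u) (phi v)).
Proof.
move=> a_4m /andP[r_gt0 r_lt] phi_lt phi_incr red_phi.
have lt_A : m.-1 < a by lia.
have lt_B : m < a by lia.
have lt_C : (3 * m).-1 < a by lia.
have lt_D : 3 * m < a by lia.
pose A := Ordinal lt_A; pose B := Ordinal lt_B; pose C := Ordinal lt_C; pose D := Ordinal lt_D.
have cw_AB : cw_dist a A B = 1 by rewrite /cw_dist /=; case: leqP; lia.
have cw_BC : cw_dist a B C = m.*2.-1 by rewrite /cw_dist /=; case: leqP; lia.
have cw_CD : cw_dist a C D = 1 by rewrite /cw_dist /=; case: leqP; lia.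
have cw_DA : cw_dist a D A = m.*2.-1 by rewrite /cw_dist /=; case: leqP; lia.
have cw_AC : cw_dist a A C = m.*2 by rewrite /cw_dist /=; case: leqP; lia.
have cw_AD : cw_dist a A D = m.*2.+1 by rewrite /cw_dist /=; case: leqP; lia.
have incr := cw_dist_incr phi_lt phi_incr.
apply: (@parallel_chords_not_red h r (phi A) (phi B) (phi C) (phi D)) => //.
- by have := incr A B; lia.
- by have := incr B C; lia.
- by have := incr C D; lia.
- by have := incr D A; lia.
- rewrite (cw_distD_incr phi_lt phi_incr (j := B)) ?(cw_distD_incr phi_lt phi_incr (j := C)) //.
    by rewrite cw_AC cw_CD cw_AD addn1.
  by rewrite cw_AB cw_BC cw_AC; lia.
- by apply: red_phi; rewrite /nest_matching -val_eqE /=; lia.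
- by apply: red_phi; rewrite /nest_matching -val_eqE /=; lia.
Qed.

Lemma blue_star_size h r b (ctr : 'I_b) (psi : 'I_b -> nat) :
  (forall u, psi u < h.*2.+1) -> injective psi ->
  (forall u, u != ctr -> ~~ red h r (psi ctr) (psi u)) -> b.-1 <= (h - r).*2.
Proof.
move=> psi_lt psi_inj blue.
pose offset u := cw_dist h.*2.+1 (psi ctr) (psi u).
have offset_uniq : uniq [seq offset u | u <- enum (predC1 ctr)].
  rewrite map_inj_in_uniq ?enum_uniq // => u v _ _ eq_uv.
  exact/psi_inj/(cw_dist_inj (psi_lt ctr) (psi_lt u) (psi_lt v) eq_uv).
have /(uniq_leq_size offset_uniq) :
    {subset [seq offset u | u <- enum (predC1 ctr)] <= iota r (h - r) ++ iota h.+2 (h - r)}.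
  move=> k /mapP[u]; rewrite mem_enum => /= u_ctr ->.
  have ctr_u : psi ctr != psi u by rewrite (inj_eq psi_inj) eq_sym.
  have := blue u u_ctr; have := cw_distC (psi_lt ctr) (psi_lt u) ctr_u.
  by rewrite /red /circ_dist mem_cat !mem_iota /offset; lia.
by rewrite size_map size_cat !size_iota -cardE cardC1 card_ord; lia.
Qed.

Theorem proposition4p34 (a b : nat) (ctr : 'I_b) :
  4 <= a -> 4 %| a -> 3 <= b -> odd b ->
  Rcyc_ge (nest_matching a) (star b ctr) (a + b - 3).
Proof.
move=> a_ge4 /dvdnP[m a_4m] b_ge3 b_odd n n_lt cyc.
have b_half := odd_double_half b; rewrite b_odd in b_half.
pose h := m.*2 + b./2 - 2; pose r := m.*2.-1.
have n_le : n <= h.*2.+1 by rewrite /h; lia.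
have val_lt (T : Type) (f : T -> 'I_n) x : f x < h.*2.+1 := leq_trans (ltn_ord _) n_le.
have col : coloring (fun x y : 'I_n => if red h r x y then 1 else 2).
  split=> [x y | x y _]; last by case: red.
  by rewrite /red /circ_dist minnC.
case: (cyc _ col) => [[phi [[_ phi_red] [t phi_incr]]] | [psi [[psi_inj psi_blue] _]]].
  apply: (@nest_matching_not_red a m h r (fun i => phi i) t _ _ (val_lt _ phi) phi_incr).
  - by lia.
  - by rewrite /r; lia.
  - by move=> u v /phi_red; case: red.
have blue u : u != ctr -> ~~ red h r (psi ctr) (psi u).
  move=> u_ctr; apply/negP => red_u.
  have /psi_blue : star b ctr ctr u by rewrite /star eqxx /= andbT eq_sym.
  by rewrite red_u.
have := blue_star_size (val_lt _ psi) (inj_comp val_inj psi_inj) blue.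
by rewrite /h /r; lia.
Qed.
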